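(* Let $\kappa,\lambda$ be regular cardinals with $\aleph_0<\kappa$ and $\kappa^+<\lambda$, and let $S\subseteq\{\delta<\lambda:\operatorname{cf}\delta=\kappa\}$ be stationary in $\lambda$. Let $\langle c_\delta:\delta\in S\rangle$ be any sequence such that each $c_\delta\subseteq\delta$ is a club of $\delta$ of order type $\kappa$, and let $E'\subseteq\lambda$ be a club. Then there is a club $E\subseteq E'$ such that, setting $c'_\delta=c_\delta\cap E$ for $\delta\in S$: (1) each $c'_\delta$ is a closed subset of $\delta$; (2) for every club $E''\subseteq\lambda$ the set $\{\delta\in S: c'_\delta\subseteq E'',\ \sup c'_\delta=\delta,\ \operatorname{otp}c'_\delta=\kappa\}$ is stationary in $\lambda$.
   Context: $\operatorname{otp}$ denotes order type; a club of $\lambda$ is a closed unbounded subset of $\lambda$. *)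

(* Ordinals are represented by well-ordered types: an ordinal
   alpha is a type A with a strict well-order ltA (the elements of A are the
   ordinals below alpha).  All notions below are invariant under order
   isomorphism, so this faithfully represents ordinals/cardinals. *)
From Stdlib Require Import Classical.
Set Implicit Arguments.

Section WO.
Variables (L : Type) (lt : L -> L -> Prop).

Definition le (x y : L) : Prop := lt x y \/ x = y.

Definition well_order : Prop :=
  (forall x, ~ lt x x) /\
  (forall x y z, lt x y -> lt y z -> lt x z) /\
  (forall x y, lt x y \/ x = y \/ lt y x) /\
  well_founded lt.

Definition below (d : L) : L -> Prop := fun x => lt x d.

(* D is a (downward closed) domain, either all of L or an initial segment *)
Definition unbounded_in (D C : L -> Prop) : Prop :=
  forall x, D x -> exists y, C y /\ D y /\ le x y.

Definition closed_in (D C : L -> Prop) : Prop :=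
  forall g, D g ->
    (exists y, C y /\ lt y g) ->
    (forall x, lt x g -> exists y, C y /\ lt x y /\ lt y g) ->
    C g.

Definition subset (A B : L -> Prop) : Prop := forall x, A x -> B x.

Definition closed_subset_of (D C : L -> Prop) : Prop :=
  subset C D /\ closed_in D C.

Definition club_in (D C : L -> Prop) : Prop :=
  subset C D /\ closed_in D C /\ unbounded_in D C.

Definition club (C : L -> Prop) : Prop := club_in (fun _ => True) C.

Definition stationary (S : L -> Prop) : Prop :=
  forall C, club C -> exists x, S x /\ C x.

Definition is_sup (A : L -> Prop) (d : L) : Prop :=
  (forall y, A y -> le y d) /\
  (forall z, (forall y, A y -> le y z) -> le d z).

Variables (K : Type) (ltK : K -> K -> Prop).

Definition otp_eq (A : L -> Prop) : Prop :=
  exists f : K -> L,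
    (forall a b, ltK a b -> lt (f a) (f b)) /\
    (forall a, A (f a)) /\ (forall y, A y -> exists a, f a = y).

Definition otp_ge (A : L -> Prop) : Prop :=
  exists f : K -> L,
    (forall a b, ltK a b -> lt (f a) (f b)) /\ (forall a, A (f a)).

Definition cof_is (D : L -> Prop) : Prop :=
  (exists A, subset A D /\ unbounded_in D A /\ otp_eq A) /\
  (forall A, subset A D -> unbounded_in D A -> otp_ge A).

End WO.

Definition infinite (A : Type) : Prop := exists f : nat -> A, forall m n, f m = f n -> m = n.

Definition uncountable (A : Type) : Prop :=
  ~ exists f : A -> nat, forall a b, f a = f b -> a = b.

Definition regular (A : Type) (ltA : A -> A -> Prop) : Prop :=
  well_order ltA /\ infinite A /\ cof_is ltA ltA (fun _ : A => True).

(* kappa^+ < lambda: some delta < lambda has cardinality > kappa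
   (kappa^+ is the least ordinal of cardinality > kappa) *)
Definition succ_card_lt (K L : Type) (ltL : L -> L -> Prop) : Prop :=
  exists d : L, ~ exists f : {x : L | ltL x d} -> K,
      forall a b, f a = f b -> a = b.

From Stdlib Require Import Classical ClassicalEpsilon.
From Stdlib Require Import FunctionalExtensionality PropExtensionality FinFun.

(* Suppose no club E ⊆ E' works.  Then every club X ⊆ E' comes with a club G(X) such that
   no δ ∈ S ∩ G(X) has c_δ ∩ X ⊆ G(X), sup (c_δ ∩ X) = δ and otp (c_δ ∩ X) = κ.  Iterate:
   E_j = E' ∩ ⋂_{i<j} G(E_i) is a decreasing λ-sequence of clubs, since λ is regular and
   uncountable.  Take j < λ with |j| > κ and δ ∈ S a limit point of E_j.  As cf δ = κ > ℵ₀,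
   each c_δ ∩ E_i (i < j) is a club of δ of order type κ, and δ ∈ G(E_i); hence some
   x_i ∈ c_δ ∩ E_i lies outside G(E_i).  For i < k we have x_k ∈ E_k ⊆ G(E_i) ∌ x_i, so
   i ↦ x_i injects j into c_δ, a set of size κ: a contradiction. *)

Set Implicit Arguments.
Unset Strict Implicit.

Lemma wf_recursion_exists (A : Type) (R : A -> A -> Prop) (wf : well_founded R)
  (T : Type) (F : forall a, (forall b, R b a -> T) -> T) :
  exists g : A -> T, forall a, g a = F a (fun b _ => g b).
Proof.
  exists (Fix wf (fun _ => T) F). intro a. rewrite Fix_eq; [reflexivity|].
  intros x f1 f2 Hf. f_equal.
  apply functional_extensionality_dep; intro y.
  apply functional_extensionality_dep; intro p. apply Hf.
Qed.

Lemma otp_eq_injective (A B J : Type) (ltA : A -> A -> Prop) (ltB : B -> B -> Prop)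
  (X : A -> Prop) (h : J -> A) :
  otp_eq ltA ltB X -> (forall i, X (h i)) -> Injective h -> exists p : J -> B, Injective p.
Proof.
  intros [f [_ [_ Hf]]] HX Hh.
  destruct (choice (fun i a => f a = h i) (fun i => Hf (h i) (HX i))) as [p Hp].
  exists p. intros i k E. apply Hh. rewrite <- Hp, <- (Hp k). congruence.
Qed.

Section WellOrder.
Variables (A : Type) (lt : A -> A -> Prop).
Hypothesis Hwo : well_order lt.

Lemma wo_irrefl x : ~ lt x x.
Proof. destruct Hwo as [H _]; auto. Qed.

Lemma wo_trans x y z : lt x y -> lt y z -> lt x z.
Proof. destruct Hwo as [_ [H _]]; eauto. Qed.

Lemma wo_total x y : lt x y \/ x = y \/ lt y x.
Proof. destruct Hwo as [_ [_ [H _]]]; auto. Qed.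

Lemma wo_wf : well_founded lt.
Proof. destruct Hwo as [_ [_ [_ H]]]; auto. Qed.

Lemma wo_le_of_not_lt x y : ~ lt x y -> le lt y x.
Proof. intro H; destruct (wo_total x y) as [h|[h|h]]; unfold le; auto; tauto. Qed.

Lemma wo_not_le_of_lt x y : lt x y -> ~ le lt y x.
Proof.
  intros H [h|h]; [exact (wo_irrefl (wo_trans H h)) | subst; exact (wo_irrefl H)].
Qed.

Lemma wo_le_lt_trans x y z : le lt x y -> lt y z -> lt x z.
Proof. intros [h|h] H; subst; eauto using wo_trans. Qed.

Lemma wo_lt_le_trans x y z : lt x y -> le lt y z -> lt x z.
Proof. intros H [h|h]; subst; eauto using wo_trans. Qed.

Lemma wo_le_trans x y z : le lt x y -> le lt y z -> le lt x z.
Proof. intros [h|h] H; subst; auto. left; eapply wo_lt_le_trans; eauto. Qed.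

Lemma wo_le_antisym x y : le lt x y -> le lt y x -> x = y.
Proof. intros [h|h] H; auto. exfalso; exact (wo_not_le_of_lt h H). Qed.

Lemma wo_least (P : A -> Prop) :
  (exists x, P x) -> exists x, P x /\ forall y, P y -> le lt x y.
Proof.
  intros [x0 Hx0]. apply NNPP; intro Hn.
  assert (Hnone : forall x, ~ P x).
  { intro x. induction x as [x IH] using (well_founded_ind wo_wf). intro Px.
    apply Hn. exists x. split; auto. intros y Py.
    apply wo_le_of_not_lt. intro Hyx. exact (IH y Hyx Py). }
  exact (Hnone x0 Hx0).
Qed.

Lemma strict_mono_ge (f : A -> A) :
  (forall a b, lt a b -> lt (f a) (f b)) -> forall x, le lt x (f x).
Proof.
  intros Hf x. apply wo_le_of_not_lt.
  induction x as [x IH] using (well_founded_ind wo_wf).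
  intro H. exact (IH (f x) H (Hf _ _ H)).
Qed.

Lemma strict_mono_injective (B : Type) (ltB : B -> B -> Prop) (f : B -> A) :
  (forall x y, ltB x y \/ x = y \/ ltB y x) ->
  (forall a b, ltB a b -> lt (f a) (f b)) -> Injective f.
Proof.
  intros HB Hf a b E.
  destruct (HB a b) as [h|[h|h]]; auto; apply Hf in h; rewrite E in h;
    exfalso; exact (wo_irrefl h).
Qed.

Definition limit_point (C : A -> Prop) (g : A) : Prop :=
  (exists y, C y /\ lt y g) /\ (forall w, lt w g -> exists y, C y /\ lt w y /\ lt y g).

Lemma closed_limit_point (D C : A -> Prop) g :
  closed_in lt D C -> D g -> limit_point C g -> C g.
Proof. intros HC Dg [H1 H2]. apply HC; auto. Qed.

Lemma limit_point_mono (X Y : A -> Prop) g :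
  subset Y X -> limit_point Y g -> limit_point X g.
Proof.
  intros H [[y [h1 h2]] h3]. split; [exists y; auto|].
  intros w hw. destruct (h3 w hw) as [z [a b]]. exists z; auto.
Qed.

Section ClosingOff.
Variables (J : Type) (D : A -> Prop) (C : J -> A -> Prop).
Hypothesis HD : forall x y, D y -> le lt x y -> D x.
Hypothesis HC : forall i x, D x -> exists y, C i y /\ D y /\ lt x y.
Hypothesis HDI : forall h : J -> A, (forall i, D (h i)) ->
  exists z, D z /\ forall i, le lt (h i) z.
Hypothesis HDnat : forall s : nat -> A, (forall n, D (s n)) ->
  exists z, D z /\ forall n, lt (s n) z.

Lemma common_limit_point_above x :
  D x -> exists g, D g /\ lt x g /\ forall i, limit_point (C i) g.
Proof.
  intro Dx. pose (inh := inhabits x).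
  pose (next := fun i y => epsilon inh (fun z => C i z /\ D z /\ lt y z)).
  assert (Hnext : forall i y, D y -> C i (next i y) /\ D (next i y) /\ lt y (next i y)).
  { intros i y Dy. apply epsilon_spec. auto. }
  pose (up := fun y => epsilon inh (fun z => D z /\ forall i, le lt (next i y) z)).
  assert (Hup : forall y, D y -> D (up y) /\ forall i, le lt (next i y) (up y)).
  { intros y Dy. apply epsilon_spec, HDI. intro i; apply Hnext; auto. }
  (* each interval (s n, s (n+1)] meets every C i, so the supremum of the s n is a common
     limit point *)
  pose (s := fun n => Nat.iter n up x).
  assert (Ds : forall n, D (s n)).
  { induction n; simpl; auto. apply Hup; auto. }
  assert (Hs : forall i n, lt (s n) (next i (s n)) /\ le lt (next i (s n)) (s (S n))).
  { intros i n. split; [apply Hnext; auto | apply (Hup (s n) (Ds n))]. }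
  destruct (wo_least (P := fun z => D z /\ forall n, lt (s n) z)) as [g [[Dg Hg] Hmin]].
  { apply HDnat; auto. }
  exists g. split; [auto | split; [apply (Hg 0) | intro i; split]].
  - exists (next i (s 0)). split; [apply Hnext; auto|].
    eapply wo_le_lt_trans; [apply Hs | apply Hg].
  - intros w Hw.
    assert (Hn : exists n, le lt w (s n)).
    { apply NNPP; intro Hn. apply (wo_not_le_of_lt Hw). apply Hmin. split.
      - apply (HD Dg). left; auto.
      - intro n. apply NNPP; intro h. apply Hn. exists n. apply wo_le_of_not_lt; auto. }
    destruct Hn as [n Hn]. exists (next i (s n)). split; [apply Hnext; auto|]. split.
    + eapply wo_le_lt_trans; [exact Hn | apply Hs].
    + eapply wo_le_lt_trans; [apply Hs | apply Hg].
Qed.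
End ClosingOff.

Lemma bounded_of_not_injective (D : A -> Prop) (B : Type) (ltB : B -> B -> Prop)
  (J : Type) (h : J -> A) :
  (forall x y, ltB x y \/ x = y \/ ltB y x) ->
  (forall X, subset X D -> unbounded_in lt D X -> otp_ge lt ltB X) ->
  (forall i, D (h i)) -> ~ (exists p : B -> J, Injective p) ->
  exists z, D z /\ forall i, lt (h i) z.
Proof.
  intros HB Hcof Dh Hnot. apply NNPP; intro Hn.
  assert (Hunb : unbounded_in lt D (fun y => exists i, h i = y)).
  { intros x Dx. apply NNPP; intro Hx. apply Hn. exists x. split; auto. intro i.
    apply NNPP; intro hi. apply Hx. exists (h i). split; eauto. split; auto.
    apply wo_le_of_not_lt; auto. }
  assert (Hrange : subset (fun y => exists i, h i = y) D) by (intros y [i <-]; apply Dh).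
  destruct (Hcof _ Hrange Hunb) as [f [Hf Hfh]].
  destruct (choice (fun a i => h i = f a) Hfh) as [p Hp].
  apply Hnot. exists p. intros a b E.
  apply (strict_mono_injective HB Hf). rewrite <- Hp, <- (Hp b). congruence.
Qed.

Section Regular.
Hypothesis Hcof : forall X, unbounded_in lt (fun _ => True) X -> otp_ge lt lt X.

Lemma not_injective_below j (p : A -> A) : (forall x, lt (p x) j) -> ~ Injective p.
Proof.
  intros Hp Hinj.
  (* listed increasingly, the p-records would form a strictly increasing map A -> A bounded
     by j *)
  pose (record := fun x => forall y, lt (p y) (p x) -> lt y x).
  assert (Hrec : unbounded_in lt (fun _ => True) record).
  { intros x _.
    destruct (wo_least (P := fun v => exists y, le lt x y /\ p y = v)) as [v [[y [Hxy Hyv]] Hmin]].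
    { exists (p x). exists x. split; auto. right; auto. }
    exists y. split; [|split; auto].
    intros z Hz. apply NNPP; intro Hzy.
    apply (wo_not_le_of_lt Hz). rewrite Hyv. apply Hmin. exists z. split; auto.
    eapply wo_le_trans; [exact Hxy | apply wo_le_of_not_lt; auto]. }
  destruct (Hcof Hrec) as [f [Hf Hfrec]].
  assert (Hq : forall a b, lt a b -> lt (p (f a)) (p (f b))).
  { intros a b h. destruct (wo_total (p (f a)) (p (f b))) as [e|[e|e]]; auto; exfalso.
    - apply Hinj in e. apply Hf in h. rewrite e in h. exact (wo_irrefl h).
    - apply Hfrec in e. apply Hf in h. exact (wo_irrefl (wo_trans e h)). }
  exact (wo_not_le_of_lt (Hp (f j)) (strict_mono_ge Hq j)).
Qed.

Lemma bounded_below j (h : {i | lt i j} -> A) : exists z, forall i, lt (h i) z.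
Proof.
  destruct (bounded_of_not_injective (D := fun _ => True) (ltB := lt) (h := h))
    as [z [_ Hz]]; eauto.
  - exact wo_total.
  - intros [p Hp]. apply (not_injective_below (j := j) (p := fun x => proj1_sig (p x))).
    + intro x. exact (proj2_sig (p x)).
    + intros x y E. apply Hp. destruct (p x), (p y); simpl in E; subst.
      f_equal. apply proof_irrelevance.
Qed.
End Regular.
End WellOrder.

Lemma regular_well_order (A : Type) (lt : A -> A -> Prop) : regular lt -> well_order lt.
Proof. intros [H _]; exact H. Qed.

Lemma regular_cof (A : Type) (lt : A -> A -> Prop) : regular lt ->
  forall X, unbounded_in lt (fun _ => True) X -> otp_ge lt lt X.
Proof. intros [_ [_ [_ H]]] X HX. apply H; auto. intros x _; exact I. Qed.

Lemma uncountable_of_succ_card_lt (K L : Type) (ltK : K -> K -> Prop) (ltL : L -> L -> Prop) :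
  regular ltK -> succ_card_lt K ltL -> uncountable L.
Proof.
  intros [_ [[e He] _]] [j Hj] [p Hp].
  apply Hj. exists (fun x => e (p (proj1_sig x))). intros [x hx] [y hy] E. simpl in E.
  apply He, Hp in E. subst. f_equal. apply proof_irrelevance.
Qed.

Lemma unbounded_otp_eq (K : Type) (ltK : K -> K -> Prop) (B : K -> Prop) :
  regular ltK -> (forall a, exists b, B b /\ ltK a b) -> otp_eq ltK ltK B.
Proof.
  intros HK HB. pose proof (regular_well_order HK) as wo.
  assert (inh : inhabited K) by (destruct HK as [_ [[e _] _]]; exact (inhabits (e 0))).
  pose (least_above := fun (a : K) (prev : forall b, ltK b a -> K) y =>
     B y /\ (forall b (p : ltK b a), ltK (prev b p) y) /\
     forall y', B y' -> (forall b (p : ltK b a), ltK (prev b p) y') -> le ltK y y').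
  destruct (wf_recursion_exists (wo_wf wo) (fun a prev => epsilon inh (least_above a prev)))
    as [g Hg].
  assert (Hs : forall a, least_above a (fun b _ => g b) (g a)).
  { intro a. rewrite (Hg a). apply epsilon_spec.
    destruct (bounded_below wo (regular_cof HK) (j := a) (fun b => g (proj1_sig b))) as [z Hz].
    destruct (HB z) as [y0 [By0 Hy0]].
    destruct (wo_least wo (P := fun y => B y /\ forall b, ltK b a -> ltK (g b) y))
      as [y [[By Hy] Hmin]].
    { exists y0. split; auto. intros b hb. exact (wo_trans wo (Hz (exist _ b hb)) Hy0). }
    exists y. split; [auto | split; [auto | intros y' By' H'; apply Hmin; auto]]. }
  assert (Hmono : forall a b, ltK a b -> ltK (g a) (g b)) by (intros a b h; apply (Hs b); auto).
  exists g. split; [exact Hmono | split; [intro a; apply Hs|]].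
  intros y By.
  (* for the least a with y <= g a, y was itself a candidate for g a *)
  destruct (wo_least wo (P := fun a => le ltK y (g a))) as [a [Ha Hmin]].
  { exists y. apply (strict_mono_ge wo Hmono). }
  exists a. apply (wo_le_antisym wo); auto. apply (Hs a); auto.
  intros b hb. apply NNPP; intro h. apply (wo_le_of_not_lt wo) in h.
  exact (wo_not_le_of_lt wo hb (Hmin b h)).
Qed.

Section Clubs.
Variables (L : Type) (ltL : L -> L -> Prop).
Hypothesis HL : regular ltL.
Hypothesis HLunc : uncountable L.

Let wo := regular_well_order HL.

Lemma club_ext P Q : club ltL P -> (forall x, P x <-> Q x) -> club ltL Q.
Proof.
  intros HP HPQ. replace Q with P; [exact HP|].
  apply functional_extensionality; intro x. apply propositional_extensionality, HPQ.
Qed.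

Lemma bounded_countable (J : Type) (e : J -> nat) (h : J -> L) :
  Injective e -> exists z, forall i, ltL (h i) z.
Proof.
  intro He.
  destruct (bounded_of_not_injective wo (D := fun _ => True) (ltB := ltL) (h := h))
    as [z [_ Hz]]; eauto.
  - exact (wo_total wo).
  - intros X _ HX. exact (regular_cof HL HX).
  - intros [p Hp]. apply HLunc. exists (fun x => e (p x)). intros x y E. auto.
Qed.

Lemma club_strictly_unbounded C : club ltL C -> forall x, exists y, C y /\ ltL x y.
Proof.
  intros [_ [_ HC]] x.
  destruct (bounded_countable (e := fun _ : unit => 0) (fun _ => x)) as [z Hz].
  { intros [] [] _; reflexivity. }
  destruct (HC z I) as [y [Cy [_ Hy]]].
  exists y. split; auto. exact (wo_lt_le_trans wo (Hz tt) Hy).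
Qed.

Lemma club_bigcap (J : Type) (C : J -> L -> Prop) :
  (forall h : J -> L, exists z, forall i, ltL (h i) z) ->
  (forall i, club ltL (C i)) -> club ltL (fun x => forall i, C i x).
Proof.
  intros Hb HC. split; [|split].
  - intros x _; exact I.
  - intros g _ Hy Hcof i. destruct (HC i) as [_ [Hcl _]].
    apply (closed_limit_point Hcl); [exact I | split].
    + destruct Hy as [y [Hy Hyg]]. exists y; auto.
    + intros x hx. destruct (Hcof x hx) as [y' [h1 h2]]. exists y'; auto.
  - intros x _.
    destruct (common_limit_point_above wo (D := fun _ => True) (C := C)) with (x := x)
      as [g [_ [Hxg Hg]]]; auto.
    + intros i y _. destruct (club_strictly_unbounded (HC i) y) as [z [h1 h2]].
      exists z; auto.
    + intros h _. destruct (Hb h) as [z Hz]. exists z. split; auto. intro i; left; auto.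
    + intros s _. destruct (bounded_countable (e := fun n => n) s) as [z Hz];
        [intros m n E; exact E | eauto].
    + exists g. split; [|split; [exact I | left; auto]].
      intro i. destruct (HC i) as [_ [Hcl _]]. exact (closed_limit_point Hcl I (Hg i)).
Qed.

Lemma club_and P Q : club ltL P -> club ltL Q -> club ltL (fun x => P x /\ Q x).
Proof.
  intros HP HQ.
  assert (HPQ : club ltL (fun x => forall b : bool, (if b then P else Q) x)).
  { apply club_bigcap; [|intros []; auto].
    intro h. apply (bounded_countable (e := fun b : bool => if b then 0 else 1)).
    intros [] [] E; easy. }
  apply (club_ext HPQ). intro x.
  split; [intro h; exact (conj (h true) (h false)) | intros [] []; auto].
Qed.

Lemma club_bigcap_below j (C : L -> L -> Prop) :
  (forall i, ltL i j -> club ltL (C i)) -> club ltL (fun x => forall i, ltL i j -> C i x).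
Proof.
  intro HC.
  assert (H : club ltL (fun x => forall i : {i | ltL i j}, C (proj1_sig i) x)).
  { apply club_bigcap.
    - exact (bounded_below wo (regular_cof HL) (j := j)).
    - intros [i hi]; exact (HC i hi). }
  apply (club_ext H). intro x.
  split; [intros h i hi; exact (h (exist _ i hi)) | intros h [i hi]; exact (h i hi)].
Qed.

Lemma club_limit_points E : club ltL E -> club ltL (limit_point ltL E).
Proof.
  intro HE. split; [|split].
  - intros x _; exact I.
  - intros g _ [a [Ha Hag]] Hcof. split.
    + destruct Ha as [[y [Ey Hy]] _]. exists y. split; auto. exact (wo_trans wo Hy Hag).
    + intros w Hw. destruct (Hcof w Hw) as [a' [[_ Ha'] [h1 h2]]].
      destruct (Ha' w h1) as [y [Ey [h3 h4]]].
      exists y. split; auto. split; auto. exact (wo_trans wo h4 h2).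
  - intros x _.
    destruct (common_limit_point_above wo (D := fun _ => True) (C := fun _ : unit => E))
      with (x := x) as [g [_ [Hxg Hg]]]; auto.
    + intros _ y _. destruct (club_strictly_unbounded HE y) as [z [h1 h2]]. exists z; auto.
    + intros h _. exists (h tt). split; auto. intros []; right; auto.
    + intros s _. destruct (bounded_countable (e := fun n => n) s) as [z Hz];
        [intros m n E'; exact E' | eauto].
    + exists g. split; [exact (Hg tt) | split; [exact I | left; auto]].
Qed.
End Clubs.

Section ClubTrace.
Variables (K : Type) (ltK : K -> K -> Prop) (L : Type) (ltL : L -> L -> Prop).
Hypothesis HK : regular ltK.
Hypothesis HKunc : uncountable K.
Hypothesis wo : well_order ltL.
Variables (d : L) (c : L -> Prop).
Hypothesis Hcof : cof_is ltL ltK (below ltL d).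
Hypothesis Hc : club_in ltL (below ltL d) c.
Hypothesis Hotp : otp_eq ltL ltK c.

Lemma bounded_nat_below (s : nat -> L) :
  (forall n, ltL (s n) d) -> exists z, ltL z d /\ forall n, ltL (s n) z.
Proof.
  intro Hs. apply (bounded_of_not_injective wo (D := below ltL d) (ltB := ltK)); auto.
  - exact (wo_total (regular_well_order HK)).
  - exact (proj2 Hcof).
Qed.

Lemma club_trace_unbounded X : club ltL X -> limit_point ltL X d ->
  forall x, ltL x d -> exists g, ltL g d /\ ltL x g /\ c g /\ X g.
Proof.
  intros HX [_ HXd] x hx. destruct Hc as [_ [Hccl Hcunb]].
  destruct (common_limit_point_above wo (D := below ltL d)
              (C := fun b : bool => if b then c else X)) with (x := x)
    as [g [Dg [Hxg Hg]]]; auto.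
  - intros y z Dz Hyz. exact (wo_le_lt_trans wo Hyz Dz).
  - intros [] y hy; destruct (HXd y hy) as [z [Xz [h1 h2]]].
    + destruct (Hcunb z h2) as [w [cw [dw hw]]].
      exists w. split; auto. split; auto. exact (wo_lt_le_trans wo h1 hw).
    + exists z; auto.
  - intros h Dh. destruct (wo_total wo (h true) (h false)) as [e|[e|e]].
    + exists (h false). split; auto. intros []; [left|right]; auto.
    + exists (h false). split; auto. intros []; right; auto.
    + exists (h true). split; auto. intros []; [right|left]; auto.
  - exact bounded_nat_below.
  - exists g. split; auto. split; auto. split.
    + exact (closed_limit_point Hccl Dg (Hg true)).
    + destruct HX as [_ [HXcl _]]. exact (closed_limit_point HXcl I (Hg false)).
Qed.

Lemma club_trace_sup X : club ltL X -> limit_point ltL X d ->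
  is_sup ltL (fun x => c x /\ X x) d.
Proof.
  intros HX HXd. destruct Hc as [Hcd _]. split.
  - intros y [cy _]. left. exact (Hcd y cy).
  - intros z Hz. destruct (wo_total wo z d) as [e|[e|e]]; [exfalso | right | left]; auto.
    destruct (club_trace_unbounded HX HXd e) as [g [_ [Hzg [cg Xg]]]].
    exact (wo_not_le_of_lt wo Hzg (Hz g (conj cg Xg))).
Qed.

Lemma club_trace_otp X : club ltL X -> limit_point ltL X d ->
  otp_eq ltL ltK (fun x => c x /\ X x).
Proof.
  intros HX HXd. destruct Hc as [Hcd _]. destruct Hotp as [f [Hf [Hfc Hfonto]]].
  pose proof (regular_well_order HK) as woK.
  destruct (unbounded_otp_eq (B := fun a => X (f a)) HK) as [g [Hg [HgB Hgonto]]].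
  - intro a.
    destruct (club_trace_unbounded HX HXd (Hcd _ (Hfc a))) as [y [_ [Hay [cy Xy]]]].
    destruct (Hfonto y cy) as [b Hb]. subst y. exists b. split; auto.
    destruct (wo_total woK a b) as [e|[e|e]]; auto; exfalso.
    + subst. exact (wo_irrefl wo Hay).
    + exact (wo_irrefl wo (wo_trans wo Hay (Hf _ _ e))).
  - exists (fun a => f (g a)). split; [|split].
    + intros a b h. apply Hf, Hg; auto.
    + intro a. split; auto.
    + intros y [cy Xy]. destruct (Hfonto y cy) as [b Hb]. subst y.
      destruct (Hgonto b Xy) as [a Ha]. exists a. congruence.
Qed.
End ClubTrace.

Section Reflection.
Variables (K : Type) (ltK : K -> K -> Prop) (L : Type) (ltL : L -> L -> Prop).
Hypothesis HK : regular ltK.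
Hypothesis HL : regular ltL.
Hypothesis HKunc : uncountable K.
Hypothesis HKL : succ_card_lt K ltL.
Variables (S : L -> Prop) (c : L -> L -> Prop) (E' : L -> Prop).
Hypothesis HScof : forall d, S d -> cof_is ltL ltK (below ltL d).
Hypothesis HSstat : stationary ltL S.
Hypothesis Hc : forall d, S d -> club_in ltL (below ltL d) (c d) /\ otp_eq ltL ltK (c d).
Hypothesis HE' : club ltL E'.

Let wo := regular_well_order HL.
Let HLunc := uncountable_of_succ_card_lt HK HKL.

Definition trace (X : L -> Prop) d : L -> Prop := fun x => c d x /\ X x.

Definition reflects (X Y : L -> Prop) d : Prop :=
  subset (trace X d) Y /\ is_sup ltL (trace X d) d /\ otp_eq ltL ltK (trace X d).

Lemma trace_closed X d : club ltL X -> S d -> closed_subset_of ltL (below ltL d) (trace X d).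
Proof.
  intros [_ [HXcl _]] Sd. destruct (Hc Sd) as [[Hcd [Hccl _]] _]. split.
  - intros x [cx _]. exact (Hcd x cx).
  - intros g Dg Hy Hcof.
    assert (Hlim : limit_point ltL (trace X d) g) by (split; assumption).
    split.
    + apply (closed_limit_point Hccl Dg).
      exact (limit_point_mono (X := c d) (fun x hx => proj1 hx) Hlim).
    + apply (closed_limit_point HXcl I).
      exact (limit_point_mono (X := X) (fun x hx => proj2 hx) Hlim).
Qed.

Lemma nonreflecting_club X :
  ~ (forall E'', club ltL E'' -> stationary ltL (fun d => S d /\ reflects X E'' d)) ->
  exists Y, club ltL Y /\ forall d, Y d -> S d -> ~ reflects X Y d.
Proof.
  intro Hnot.
  apply not_all_ex_not in Hnot as [E'' Hnot]. apply imply_to_and in Hnot as [HE'' Hnot].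
  apply not_all_ex_not in Hnot as [F Hnot]. apply imply_to_and in Hnot as [HF Hnot].
  exists (fun x => E'' x /\ F x). split; [exact (club_and HL HLunc HE'' HF)|].
  intros d [E''d Fd] Sd [Hsub Hrest]. apply Hnot. exists d. split; [|exact Fd].
  split; [exact Sd | split; [intros x hx; exact (proj1 (Hsub x hx)) | exact Hrest]].
Qed.

Lemma descending_club_sequence (G : (L -> Prop) -> L -> Prop) :
  (forall X, club ltL (G X)) ->
  exists Es : L -> L -> Prop,
    (forall j, club ltL (Es j)) /\ (forall j, subset (Es j) E') /\
    (forall i j, ltL i j -> subset (Es j) (Es i)) /\
    (forall i j, ltL i j -> subset (Es j) (G (Es i))).
Proof.
  intro HG.
  destruct (wf_recursion_exists (wo_wf wo) (T := L -> Prop)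
              (fun j Es x => E' x /\ forall i (p : ltL i j), G (Es i p) x)) as [Es HEs].
  exists Es. split; [|split; [|split]].
  - intro j. rewrite HEs. apply (club_and HL HLunc HE'), (club_bigcap_below HL HLunc).
    intros i _. apply HG.
  - intros j x. rewrite HEs. intros [H _]; exact H.
  - intros i j hij x. rewrite (HEs j), (HEs i). intros [HE'x HGx]. split; auto.
    intros k hki. exact (HGx k (wo_trans wo hki hij)).
  - intros i j hij x. rewrite HEs. intros [_ HGx]. exact (HGx i hij).
Qed.
Lemma club_operator_reflected (G : (L -> Prop) -> L -> Prop) :
  (forall X, club ltL (G X)) ->
  exists X d, club ltL X /\ subset X E' /\ G X d /\ S d /\ reflects X (G X) d.
Proof.
  intro HG.
  destruct (descending_club_sequence HG) as [Es [Es_club [Es_E' [Es_anti Es_G]]]].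
  destruct HKL as [j Hj].
  destruct (HSstat (club_limit_points HL HLunc (Es_club j))) as [d [Sd Hd]].
  destruct (Hc Sd) as [Hcd Hotp].
  apply NNPP; intro Hno.
  assert (Hwit : forall i : {i | ltL i j},
             exists x, trace (Es (proj1_sig i)) d x /\ ~ G (Es (proj1_sig i)) x).
  { intros [i hi]; simpl. apply NNPP; intro Hall. apply Hno.
    assert (Hdi : limit_point ltL (Es i) d) by exact (limit_point_mono (Es_anti i j hi) Hd).
    exists (Es i), d. split; [auto | split; [auto | split; [| split; [exact Sd |]]]].
    - apply (Es_G i j hi). destruct (Es_club j) as [_ [Hcl _]].
      exact (closed_limit_point Hcl I Hd).
    - split; [|split].
      + intros x hx. apply NNPP; intro hG. apply Hall. exists x; auto.
      + exact (club_trace_sup HK HKunc wo (HScof Sd) Hcd (Es_club i) Hdi).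
      + exact (club_trace_otp HK HKunc wo (HScof Sd) Hcd Hotp (Es_club i) Hdi). }
  destruct (choice _ Hwit) as [x Hx].
  assert (Hsep : forall i k, ltL (proj1_sig i) (proj1_sig k) -> x i <> x k).
  { intros i k hik Exk. apply (proj2 (Hx i)). rewrite Exk.
    apply (Es_G _ _ hik). exact (proj2 (proj1 (Hx k))). }
  apply Hj. apply (otp_eq_injective Hotp (h := x)).
  - intro i. exact (proj1 (proj1 (Hx i))).
  - intros [i hi] [k hk] Exk. destruct (wo_total wo i k) as [e|[e|e]].
    + exfalso. exact (Hsep (exist _ i hi) (exist _ k hk) e Exk).
    + subst k. f_equal. apply proof_irrelevance.
    + exfalso. exact (Hsep (exist _ k hk) (exist _ i hi) e (eq_sym Exk)).
Qed.
End Reflection.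

Theorem mainTheorem3
  (K : Type) (ltK : K -> K -> Prop) (L : Type) (ltL : L -> L -> Prop)
  (HK : regular ltK) (HL : regular ltL)
  (HKunc : uncountable K) (HKL : succ_card_lt K ltL)
  (S : L -> Prop)
  (HScof : forall d, S d -> cof_is ltL ltK (below ltL d))
  (HSstat : stationary ltL S)
  (c : L -> L -> Prop)
  (Hc : forall d, S d -> club_in ltL (below ltL d) (c d) /\ otp_eq ltL ltK (c d))
  (E' : L -> Prop) (HE' : club ltL E') :
  exists E : L -> Prop,
    club ltL E /\ subset E E' /\
    (forall d, S d -> closed_subset_of ltL (below ltL d) (fun x => c d x /\ E x)) /\
    (forall E'' : L -> Prop, club ltL E'' ->
       stationary ltL (fun d => S d /\
         subset (fun x => c d x /\ E x) E'' /\
         is_sup ltL (fun x => c d x /\ E x) d /\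
         otp_eq ltL ltK (fun x => c d x /\ E x))).
Proof.
  apply NNPP; intro Hno.
  assert (Hbad : forall X, exists Y, club ltL Y /\
            (club ltL X -> subset X E' -> forall d, Y d -> S d -> ~ reflects ltK ltL c X Y d)).
  { intro X. destruct (classic (club ltL X /\ subset X E')) as [[HX HXE'] | HnX].
    - destruct (nonreflecting_club HK HL HKL (S := S) (c := c) (X := X)) as [Y [HY HYX]].
      + intro Hall. apply Hno. exists X.
        split; [exact HX | split; [exact HXE' | split; [|exact Hall]]].
        intros d Sd. exact (trace_closed Hc HX Sd).
      + exists Y. split; auto.
    - exists E'. split; [exact HE' | tauto]. }
  destruct (choice _ Hbad) as [G HG].
  destruct (club_operator_reflected HK HL HKunc HKL HScof HSstat Hc HE' (G := G)
              (fun X => proj1 (HG X))) as [X [d [HX [HXE' [GXd [Sd Hrefl]]]]]].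
  exact (proj2 (HG X) HX HXE' d GXd Sd Hrefl).
Qed.
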